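(* Let $\theta$ be a random variable with a continuous distribution, let $u(q,\theta)$ be twice differentiable, strictly concave and monotone increasing in $q$ for every $\theta$, let $\pi_0>0$, $\pi_2>0$, $p\in(0,1)$, and let $\phi:\mathbb{R}\to\mathbb{R}$ be convex, twice differentiable, with $\phi(0)=\phi'(0)=0$ and $\phi(x)=\phi(-x)$. Define $J^b(f,q,\theta)=\pi_0 q-u(q,\theta)+\phi(f-q)$, $J^c(f,q,\theta)=\pi_0 q-u(q,\theta)-\pi_2(f-q)$, $q^b(f,\theta)=\arg\min_q J^b(f,q,\theta)$, $q^c(\theta)=\arg\min_q J^c(f,q,\theta)$, $$H(f)=p\,\mathbb{E}_\theta J^c(f,q^c(\theta),\theta)+(1-p)\,\mathbb{E}_\theta J^b(f,q^b(f,\theta),\theta),$$ and the expected marginal utility $$M(f)=p\,\mathbb{E}_\theta\frac{\partial u}{\partial q}(q^c(\theta),\theta)+(1-p)\,\mathbb{E}_\theta\frac{\partial u}{\partial q}(q^b(f,\theta),\theta).$$ Then the optimal baseline report $f^*$ (a minimizer of $H$) satisfies $\pi_0=M(f^* )$ and is a global minimizer of $H$. Moreover, the minimizer is unique when $\phi$ is strictly convex.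
   Context: This describes a consumer in an incentive-based demand response program with self-reported baseline $f$: with probability $p$ the consumer is called and paid $\pi_2$ per unit of reduction $f-q$; otherwise it is charged the penalty $\phi(f-q)$. $\pi_0$ is the retail price of electricity. The minimizers $q^b$, $q^c$ are assumed to exist and be characterized by their first-order conditions. *)

From HB Require Import structures.
From mathcomp Require Import all_boot all_order all_algebra.
From mathcomp Require Import all_classical all_reals all_analysis.
Set Implicit Arguments. Unset Strict Implicit. Unset Printing Implicit Defensive.
Import Order.TTheory GRing.Theory Num.Theory.
Import numFieldNormedType.Exports.
Local Open Scope classical_set_scope.
Local Open Scope ring_scope.

Section Defs.
Variable R : realType.

Definition twice_diff (g : R -> R) : Prop :=
  forall x, derivable g x 1 /\ derivable (derive1 g) x 1.

Definition convex_fun (g : R -> R) : Prop :=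
  forall a b t, 0 <= t <= 1 -> g (t * a + (1 - t) * b) <= t * g a + (1 - t) * g b.

Definition strictly_convex_fun (g : R -> R) : Prop :=
  forall a b t, a != b -> 0 < t < 1 ->
    g (t * a + (1 - t) * b) < t * g a + (1 - t) * g b.

Definition strictly_concave_fun (g : R -> R) : Prop :=
  forall a b t, a != b -> 0 < t < 1 ->
    t * g a + (1 - t) * g b < g (t * a + (1 - t) * b).

Definition Jb (pi0 : R) (u : R -> R -> R) (phi : R -> R) (f q th : R) : R :=
  pi0 * q - u q th + phi (f - q).

Definition Jc (pi0 pi2 : R) (u : R -> R -> R) (f q th : R) : R :=
  pi0 * q - u q th - pi2 * (f - q).

Definition du (u : R -> R -> R) (q th : R) : R := derive1 (fun x => u x th) q.

Definition Ex (mu : probability R R) (g : R -> R) : R := Rintegral mu setT g.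

Definition Hfun (mu : probability R R) (p pi0 pi2 : R) (u : R -> R -> R)
  (phi : R -> R) (qb : R -> R -> R) (qc : R -> R) (f : R) : R :=
  p * Ex mu (fun th => Jc pi0 pi2 u f (qc th) th)
  + (1 - p) * Ex mu (fun th => Jb pi0 u phi f (qb f th) th).

Definition Mfun (mu : probability R R) (p : R) (u : R -> R -> R)
  (qb : R -> R -> R) (qc : R -> R) (f : R) : R :=
  p * Ex mu (fun th => du u (qc th) th)
  + (1 - p) * Ex mu (fun th => du u (qb f th) th).

End Defs.

From HB Require Import structures.
From mathcomp Require Import all_boot all_order all_algebra.
From mathcomp Require Import all_classical all_reals all_analysis.
From mathcomp Require Import ring lra.
Import Order.TTheory GRing.Theory Num.Theory.
Import numFieldNormedType.Exports.
Set Implicit Arguments. Unset Strict Implicit. Unset Printing Implicit Defensive.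
Local Open Scope classical_set_scope.
Local Open Scope ring_scope.

(* Let V(f, th) = min_q J^b(f, q, th). The first-order condition at q^b(f, th)
   gives pi0 - u'(q^b(f, th), th) = phi'(f - q^b(f, th)), and the tangent
   inequalities of the convex phi and of the concave u make this number a
   subgradient of V(., th) at f; the first-order condition at q^c(th) gives
   u'(q^c(th), th) = pi0 + pi2, so the called cost is affine in f with slope
   -pi2. Averaging over th, pi0 - M(f) is a subgradient of H at every f: H is
   convex and its minimisers are the zeros of pi0 - M, as soon as pi0 - M is
   continuous. A subgradient that is also a derivative is continuous, so the
   integrands are continuous in f, and dominated convergence (with dominating
   functions coming from monotonicity) passes to the expectation. When phi is
   strictly convex the integrand, hence pi0 - M, is strictly increasing, so it
   has at most one zero. *)

Lemma normr_le_itv (R : realDomainType) (a b x : R) : a <= x <= b -> `|x| <= `|a| + `|b|.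
Proof.
move=> /andP [ax xb]; rewrite ler_norml.
have := ler_norm b; have := ler_norm (- a); rewrite normrN.
have := normr_ge0 a; have := normr_ge0 b; lra.
Qed.

Section real_derivative.
Variable R : realType.
Implicit Types (g : R -> R) (x y : R).

Lemma derivable1_approx g x e : derivable g x 1 -> 0 < e ->
  exists2 d, 0 < d & forall h, `|h| < d ->
    `|g (x + h) - g x - h * derive1 g x| <= e * `|h|.
Proof.
move=> /cvg_ex [l gl] e0.
have -> : derive1 g x = l by rewrite derive1E; exact: cvg_lim.
move: gl => /cvgrPdist_le /(_ e e0).
rewrite near_withinE => /nbhs_ballP [d /= d0 gd].
exists d => // h hd; have [->|h0] := eqVneq h 0.
  by rewrite addr0 subrr mul0r subr0 normr0 mulr0.
have /gd : ball 0 d h by rewrite /ball /= sub0r normrN.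
move=> /(_ h0); rewrite [h%:A]mulr1 /GRing.scale /= (addrC h x) => le_e.
have -> : g (x + h) - g x - h * l = - h * (l - h^-1 * (g (x + h) - g x)).
  by field.
by rewrite normrM normrN mulrC ler_wpM2r.
Qed.

Lemma is_derive1 g x : derivable g x 1 -> is_derive x 1 g (derive1 g x).
Proof. by rewrite derive1E; exact: derivableP. Qed.

Lemma is_derive_min_eq0 g (dg : R -> R) (c : R) :
  (forall t : R, is_derive t 1 g (dg t)) -> (forall t, g c <= g t) -> dg c = 0.
Proof.
move=> gdg cmin; rewrite -(@derive_val _ _ _ _ _ _ _ (gdg c)).
have gder t : derivable g t 1 := @ex_derive _ _ _ _ _ _ _ (gdg t).
have cc : c \in `]c - 1, c + 1[ by rewrite in_itv /=; apply/andP; split; lra.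
have /(_ ltac:(lra)) := @derive1_at_min _ g (c - 1) (c + 1) c.
by move=> /(_ (fun t _ => gder t) cc (fun t _ => cmin t)) /@derive_val.
Qed.

Lemma is_derive_subr (f x : R) : is_derive x 1 (fun y => f - y) (-1).
Proof.
have -> : (fun y => f - y) = cst f - id by apply/funext.
by rewrite -[-1]sub0r; apply: is_deriveB.
Qed.

Lemma is_derive_comp_subr g f x : derivable g (f - x) 1 ->
  is_derive x 1 (fun y => g (f - y)) (- derive1 g (f - x)).
Proof.
move=> dg; have dsub := is_derive_subr f x.
have dsub1 : derivable (fun y => f - y) x 1 := @ex_derive _ _ _ _ _ _ _ dsub.
have dgsub : derivable (fun y => g (f - y)) x 1.
  by apply/derivable1_diffP/differentiable_comp; apply/derivable1_diffP.
apply: (is_derive_eq (is_derive1 dgsub)).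
rewrite (derive1_comp dsub1 dg) [X in _ * X]derive1E.
by rewrite (derive_val (is_derive := dsub)) mulrN1.
Qed.

Lemma convex_tangent_le g x y : convex_fun g -> derivable g x 1 ->
  g x + derive1 g x * (y - x) <= g y.
Proof.
move=> gconv dg; set c := derive1 g x.
suff tangent_e : forall e, 0 < e -> c * (y - x) - g y + g x <= e * `|y - x|.
  apply/ler_addgt0Pr => e e0; have e' : 0 < e / (`|y - x| + 1).
    by rewrite divr_gt0 // ltr_wpDl.
  have := tangent_e _ e'; have : e / (`|y - x| + 1) * `|y - x| <= e.
    by rewrite mulrAC ler_pdivrMr ?ltr_wpDl // ler_pM2l // lerDl.
  lra.
move=> e e0; have [d d0 gd] := derivable1_approx dg e0.
(* the chord from x to y at parameter t = d / (d + |y - x|) stays within d of x *)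
set t := d / (d + `|y - x|).
have t0 : 0 < t by rewrite divr_gt0 // ltr_wpDr.
have t1 : t <= 1 by rewrite ler_pdivrMr ?mul1r ?lerDl // ltr_wpDr.
have td : `|t * (y - x)| < d.
  rewrite normrM (ger0_norm (ltW t0)) /t mulrAC ltr_pdivrMr ?ltr_wpDr //.
  have [->|yx0] := eqVneq `|y - x| 0; first by rewrite !mulr0 addr0 mulr_gt0.
  by rewrite mulrDr ltrDr mulr_gt0 // lt0r yx0.
have /ler_normlP [approx _] := gd _ td.
have := gconv y x t; rewrite ltW //= t1 => /(_ isT).
have -> : t * y + (1 - t) * x = x + t * (y - x) by ring.
move: approx; rewrite -/c normrM (ger0_norm (ltW t0)) => approx chord.
have : t * (c * (y - x) - g y + g x) <= t * (e * `|y - x|) by lra.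
by rewrite ler_pM2l.
Qed.

Lemma strictly_convex_convex g : strictly_convex_fun g -> convex_fun g.
Proof.
move=> gsconv a b t /andP [t0 t1].
have [->|ab] := eqVneq a b.
  by rewrite -mulrDl subrKC mul1r -mulrDl subrKC mul1r.
have [->|t0'] := eqVneq t 0; first by rewrite !mul0r !add0r subr0 !mul1r.
have [->|t1'] := eqVneq t 1; first by rewrite subrr !mul0r !addr0 !mul1r.
by apply/ltW/gsconv; rewrite // lt_neqAle eq_sym t0' t0 lt_neqAle t1' t1.
Qed.

Lemma strictly_convex_derive1_inj g a b : strictly_convex_fun g ->
  derivable g a 1 -> derivable g b 1 -> derive1 g a = derive1 g b -> a = b.
Proof.
move=> gsconv da db dab; apply/eqP/negPn/negP => ab.
have gconv := strictly_convex_convex gsconv.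
have tan_ab := convex_tangent_le b gconv da.
have tan_ba := convex_tangent_le a gconv db.
have tan_mid := convex_tangent_le ((a + b) / 2) gconv da.
have := gsconv a b (1 / 2) ab ltac:(rewrite /=; apply/andP; split; lra).
have -> : 1 / 2 * a + (1 - 1 / 2) * b = (a + b) / 2 by field.
move: tan_ab tan_ba tan_mid; rewrite -dab; set c := derive1 g a.
have -> : c * ((a + b) / 2 - a) = c * (b - a) / 2 by field.
have -> : c * (a - b) = - (c * (b - a)) by ring.
lra.
Qed.

Lemma strictly_concave_convexN g : strictly_concave_fun g -> strictly_convex_fun (- g).
Proof.
move=> gsconc a b t ab t01; have := gsconc a b t ab t01; rewrite !fctE; lra.
Qed.

Lemma strictly_concave_tangent_ge g x y : strictly_concave_fun g -> derivable g x 1 ->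
  g y <= g x + derive1 g x * (y - x).
Proof.
move=> gsconc dg.
have := convex_tangent_le y (strictly_convex_convex (strictly_concave_convexN gsconc)) (derivableN dg).
by rewrite (derive1N dg) !fctE mulNr; lra.
Qed.

Lemma strictly_concave_derive1_inj g a b : strictly_concave_fun g ->
  derivable g a 1 -> derivable g b 1 -> derive1 g a = derive1 g b -> a = b.
Proof.
move=> gsconc da db dab.
apply: (strictly_convex_derive1_inj (strictly_concave_convexN gsconc)).
- exact: derivableN.
- exact: derivableN.
- by rewrite (derive1N da) (derive1N db) dab.
Qed.

End real_derivative.

Section subgradient.
Variables (R : realType) (G D : R -> R).
Hypothesis G_ge_tangent : forall x y, G x + D x * (y - x) <= G y.

Lemma subgradient_nondecreasing : {homo D : x y / x <= y}.
Proof.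
move=> x y; rewrite le_eqVlt => /orP [/eqP -> //|xy].
have := G_ge_tangent x y; have := G_ge_tangent y x => Gyx Gxy.
have : 0 <= (D y - D x) * (y - x) by lra.
by rewrite pmulr_lge0 ?subr_gt0 // subr_ge0.
Qed.

Lemma subgradient_eq0_min x : D x = 0 -> forall y, G x <= G y.
Proof. by move=> Dx0 y; have := G_ge_tangent x y; rewrite Dx0 mul0r addr0. Qed.

Lemma subgradient_min_eq0 x : (forall y, G x <= G y) ->
  (forall xn : nat -> R, xn @ \oo --> x -> D \o xn @ \oo --> D x) -> D x = 0.
Proof.
move=> xmin Dcvg.
have sgn y : (x - y) * D y <= 0 by have := G_ge_tangent y x; have := xmin y; lra.
have x_harmonic s : (fun n => x + s * harmonic n) @ \oo --> x.
  rewrite -[X in _ --> X]addr0 -(mulr0 s).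
  exact: (cvgD (cvg_cst x) (cvgMl_tmp (a := s) cvg_harmonic)).
have h_gt0 n : 0 < n.+1%:R^-1 :> R by rewrite invr_gt0.
apply/eqP; rewrite eq_le; apply/andP; split.
- apply: (cvgr_to_le (Dcvg _ (x_harmonic (-1)))); apply: nearW => n /=.
  move: (n.+1%:R^-1) (h_gt0 n) => h h0.
  by have := sgn (x + -1 * h); nra.
- apply: (cvgr_to_ge (Dcvg _ (x_harmonic 1))); apply: nearW => n /=.
  move: (n.+1%:R^-1) (h_gt0 n) => h h0.
  by have := sgn (x + 1 * h); nra.
Qed.

Hypothesis G_le_tangent : forall x e, 0 < e -> exists2 d, 0 < d &
  forall h, `|h| < d -> G (x + h) <= G x + D x * h + e * `|h|.

Lemma subgradient_continuous : continuous D.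
Proof.
move=> x; apply/cvgrPdist_le => e e0.
have [d d0 Gup] := G_le_tangent x (divr_gt0 e0 (ltr0Sn _ 1)).
(* with [h = +-d/2], tangency at [y] and [x] squeeze [D y - D x] *)
have step h y : `|h| < d -> (D y - D x) * (x + h - y) <= e / 2 * `|h|.
  move=> /Gup; have := G_ge_tangent y (x + h); have := G_ge_tangent x y; nra.
apply/nbhs_ballP; exists (d / 4); first by rewrite /= divr_gt0.
move=> y /=; rewrite /ball /= => /ltr_normlP [xy yx].
have half_d : `|d / 2| < d by rewrite ger0_norm; lra.
have [le_xy|lt_yx] := leP x y.
- have Dxy := subgradient_nondecreasing le_xy.
  rewrite distrC ger0_norm ?subr_ge0 //.
  have := step _ y half_d; rewrite ger0_norm; [nra | lra].
- have Dyx := subgradient_nondecreasing (ltW lt_yx).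
  rewrite ger0_norm ?subr_ge0 //.
  have := step (- (d / 2)) y ltac:(by rewrite normrN).
  rewrite normrN ger0_norm; [nra | lra].
Qed.
End subgradient.

Section real_integral.
Context d (T : measurableType d) (R : realType) (mu : {measure set T -> \bar R}).
Local Notation integrable f := (mu.-integrable setT (EFin \o f)).
Implicit Types f g : T -> R.

Lemma integrableD_real f g : integrable f -> integrable g ->
  integrable (fun x => f x + g x).
Proof. by move=> fi gi; apply: eq_integrable (integrableD measurableT fi gi). Qed.

Lemma integrableB_real f g : integrable f -> integrable g ->
  integrable (fun x => f x - g x).
Proof. by move=> fi gi; apply: eq_integrable (integrableB measurableT fi gi). Qed.

Lemma integrableZl_real k f : integrable f -> integrable (fun x => k * f x).
Proof. by move=> fi; apply: eq_integrable (integrableZl measurableT k fi). Qed.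

Lemma integral_EFin f : integrable f ->
  (\int[mu]_(x in setT) (f x)%:E)%E = (Rintegral mu setT f)%:E.
Proof. by move=> fi; rewrite fineK //; exact: integrable_fin_num. Qed.

Lemma Rintegral_gt0 f : mu setT != 0%E -> integrable f -> (forall x, 0 < f x) ->
  0 < Rintegral mu setT f.
Proof.
move=> mu_neq0 fi f_gt0.
rewrite lt_neqAle eq_sym Rintegral_ge0 ?andbT; last by move=> x _; exact: ltW.
apply: contra mu_neq0 => /eqP int0.
have : (\int[mu]_(x in setT) `|(EFin \o f) x|)%E = 0%E.
  rewrite -[RHS]/(0%:E) -int0 -integral_EFin //; apply: eq_integral => x _ /=.
  by rewrite gtr0_norm.
move/(ae_eq_integral_abs mu measurableT (measurable_int mu fi)) => [N [mN N0 fN]].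
rewrite -measure_le0 -N0 le_measure ?inE //= => x _.
by apply: fN => /= /(_ I) [] /eqP; rewrite gt_eqF.
Qed.

Lemma Rintegral_dominated_cvg (f_ : nat -> T -> R) f g :
  (forall n, integrable (f_ n)) -> (forall x, f_ ^~ x @ \oo --> f x) ->
  integrable g -> (forall n x, `|f_ n x| <= g x) -> integrable f ->
  (fun n => Rintegral mu setT (f_ n)) @ \oo --> Rintegral mu setT f.
Proof.
move=> f_i f_f gi f_g fi; apply: fine_cvg; rewrite -integral_EFin //.
apply: (@dominated_cvg _ _ _ mu _ measurableT (fun n x => (f_ n x)%:E) _ (EFin \o g)) => //.
- by move=> n; exact: measurable_int (f_i n).
- by move=> x _; apply: cvg_EFin; [exact: nearW | exact: f_f].
- by move=> n x _; rewrite /= lee_fin.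
Qed.

End real_integral.

Lemma Rintegral_cst_probability d (T : measurableType d) (R : realType)
  (mu : probability T R) (k : R) : Rintegral mu setT (fun _ => k) = k.
Proof.
have mu1 : fine (mu setT) = 1 by rewrite (probability_setT mu).
by rewrite Rintegral_cst // mu1 mulr1.
Qed.

Section demand_response.
Variables (R : realType) (mu : probability R R) (u : R -> R -> R) (phi : R -> R).
Variables (pi0 pi2 p : R) (qb : R -> R -> R) (qc : R -> R).
Hypothesis u_derivable : forall th q, derivable (u^~ th) q 1.
Arguments u_derivable : clear implicits.
Hypothesis u_concave : forall th, strictly_concave_fun (u^~ th).
Hypothesis phi_derivable : forall x, derivable phi x 1.
Arguments phi_derivable : clear implicits.
Hypothesis phi_convex : convex_fun phi.
Hypothesis qb_min : forall f th q, Jb pi0 u phi f (qb f th) th <= Jb pi0 u phi f q th.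
Hypothesis qc_min : forall f th q, Jc pi0 pi2 u f (qc th) th <= Jc pi0 pi2 u f q th.

Definition Jb_min (f th : R) := Jb pi0 u phi f (qb f th) th.
Definition Jb_slope (f th : R) := pi0 - du u (qb f th) th.

Lemma is_derive_Jb (f th q : R) :
  is_derive q 1 (fun q => Jb pi0 u phi f q th) (pi0 - du u q th - derive1 phi (f - q)).
Proof.
have du_q : is_derive q 1 (u^~ th) (du u q th) by apply: is_derive1; exact: u_derivable.
have dphi : is_derive q 1 (fun y => phi (f - y)) (- derive1 phi (f - q)).
  by apply: is_derive_comp_subr; exact: phi_derivable.
have -> : (fun q => Jb pi0 u phi f q th) = pi0 \*: id - u^~ th + (fun y => phi (f - y)).
  by apply/funext.
by apply: is_derive_eq; rewrite /du [pi0%:A]mulr1.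
Qed.

Lemma is_derive_Jc (f th q : R) :
  is_derive q 1 (fun q => Jc pi0 pi2 u f q th) (pi0 - du u q th + pi2).
Proof.
have du_q : is_derive q 1 (u^~ th) (du u q th) by apply: is_derive1; exact: u_derivable.
have dsub := is_derive_subr f q.
have -> : (fun q => Jc pi0 pi2 u f q th) = pi0 \*: id - u^~ th - pi2 \*: (fun y => f - y).
  by apply/funext.
by apply: is_derive_eq; rewrite /du [pi0%:A]mulr1 /GRing.scale /=; ring.
Qed.

Lemma Jb_slopeE (f th : R) : Jb_slope f th = derive1 phi (f - qb f th).
Proof. by have := is_derive_min_eq0 (is_derive_Jb f th) (qb_min f th); rewrite /Jb_slope; lra. Qed.

Lemma du_qc (th : R) : du u (qc th) th = pi0 + pi2.
Proof. by have := is_derive_min_eq0 (is_derive_Jc 0 th) (qc_min 0 th); lra. Qed.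

Lemma Jb_min_ge_tangent (th f f' : R) :
  Jb_min f th + Jb_slope f th * (f' - f) <= Jb_min f' th.
Proof.
set q := qb f th; set q' := qb f' th.
have phi_tan := convex_tangent_le (f' - q') phi_convex (phi_derivable (f - q)).
have u_tan := strictly_concave_tangent_ge q' (u_concave th) (u_derivable th q).
have slopeE := Jb_slopeE f th; rewrite -/q in slopeE.
rewrite /Jb_min /Jb /Jb_slope /du -/q -/q'; rewrite -slopeE /Jb_slope /du -/q in phi_tan.
lra.
Qed.

Lemma Jb_min_le_tangent (th f e : R) : 0 < e -> exists2 d, 0 < d &
  forall h, `|h| < d -> Jb_min (f + h) th <= Jb_min f th + Jb_slope f th * h + e * `|h|.
Proof.
move=> e0; set q := qb f th.
have [d d0 phi_approx] := derivable1_approx (phi_derivable (f - q)) e0.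
exists d => // h /phi_approx /ler_normlP [_ phi_le].
have := qb_min (f + h) th q.
rewrite /Jb_min /Jb Jb_slopeE -/q (_ : f + h - q = f - q + h); last by ring.
lra.
Qed.

Lemma Jb_slope_nondecreasing (th : R) : {homo Jb_slope^~ th : x y / x <= y}.
Proof. exact: subgradient_nondecreasing (Jb_min_ge_tangent th). Qed.

Lemma Jb_slope_continuous (th : R) : continuous (Jb_slope^~ th).
Proof. exact: subgradient_continuous (Jb_min_ge_tangent th) (Jb_min_le_tangent th). Qed.

Lemma Jb_slope_increasing (th : R) : strictly_convex_fun phi ->
  {homo Jb_slope^~ th : x y / x < y}.
Proof.
move=> phi_sconv a b ab; rewrite lt_neqAle Jb_slope_nondecreasing ?ltW // andbT.
apply: contraTneq ab => eq_slope.
have qE : qb a th = qb b th.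
  apply: (strictly_concave_derive1_inj (u_concave th)); try exact: u_derivable.
  by move: eq_slope; rewrite /Jb_slope => /addrI /oppr_inj.
have : a - qb a th = b - qb a th.
  apply: (strictly_convex_derive1_inj phi_sconv); try exact: phi_derivable.
  by rewrite -Jb_slopeE eq_slope Jb_slopeE qE.
by move/addIr => ->; rewrite ltxx.
Qed.

Hypothesis p_lt1 : p < 1.
Hypothesis Jc_integrable : forall f,
  mu.-integrable setT (EFin \o (fun th => Jc pi0 pi2 u f (qc th) th)).
Hypothesis Jb_integrable : forall f,
  mu.-integrable setT (EFin \o (fun th => Jb pi0 u phi f (qb f th) th)).
Hypothesis du_qb_integrable : forall f,
  mu.-integrable setT (EFin \o (fun th => du u (qb f th) th)).

Lemma Jb_slope_integrable f : mu.-integrable setT (EFin \o Jb_slope f).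
Proof.
apply: integrableB_real (du_qb_integrable f).
exact: finite_measure_integrable_cst.
Qed.

Definition Hslope f := pi0 - Mfun mu p u qb qc f.

Lemma HslopeE f : Hslope f = (1 - p) * Ex mu (Jb_slope f) - p * pi2.
Proof.
have Edu_qc : Ex mu (fun th => du u (qc th) th) = pi0 + pi2.
  by rewrite /Ex (eq_Rintegral _ (fun th _ => du_qc th)) Rintegral_cst_probability.
have Edu_qb : Ex mu (fun th => du u (qb f th) th) = pi0 - Ex mu (Jb_slope f).
  rewrite /Ex /Jb_slope RintegralB //; last exact: finite_measure_integrable_cst.
  by rewrite Rintegral_cst_probability opprB addrC subrK.
by rewrite /Hslope /Mfun Edu_qc Edu_qb; ring.
Qed.

Lemma Hfun_ge_tangent f f' :
  Hfun mu p pi0 pi2 u phi qb qc f + Hslope f * (f' - f) <= Hfun mu p pi0 pi2 u phi qb qc f'.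
Proof.
have EJc : Ex mu (fun th => Jc pi0 pi2 u f' (qc th) th) =
    Ex mu (fun th => Jc pi0 pi2 u f (qc th) th) - pi2 * (f' - f).
  rewrite -[pi2 * _](Rintegral_cst_probability mu) /Ex -RintegralB //; last first.
    exact: finite_measure_integrable_cst.
  by apply: eq_Rintegral => th _; rewrite /Jc; ring.
have EJb : Ex mu (Jb_min f) + (f' - f) * Ex mu (Jb_slope f) <= Ex mu (Jb_min f').
  have slope_int := Jb_slope_integrable f.
  rewrite /Ex -RintegralZl // -RintegralD //; last exact: integrableZl_real.
  apply: le_Rintegral => //; first by apply: integrableD_real => //; exact: integrableZl_real.
  by move=> th _; rewrite mulrC; exact: Jb_min_ge_tangent.
have p_le1 : 0 <= 1 - p by rewrite subr_ge0 ltW.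
have := ler_wpM2l p_le1 EJb; rewrite /Hfun EJc HslopeE /Jb_min; lra.
Qed.

Lemma Ex_Jb_slope_cvg (fn : nat -> R) f : fn @ \oo --> f ->
  (fun n => Ex mu (Jb_slope (fn n))) @ \oo --> Ex mu (Jb_slope f).
Proof.
move=> fn_f.
have [M fnM] : exists M, forall n, `|fn n| <= M.
  have /= [M [_ fnM]] := cvg_seq_bounded (cvgP _ fn_f).
  by exists (M + 1) => n; apply: (fnM (M + 1)); rewrite ?ltrDl.
rewrite /Ex; apply: (Rintegral_dominated_cvg (f_ := fun n => Jb_slope (fn n))
  (g := fun th => `|Jb_slope (- M) th| + `|Jb_slope M th|)).
- by move=> n; exact: Jb_slope_integrable.
- by move=> th; exact: (cvg_comp fn (Jb_slope^~ th) fn_f (@Jb_slope_continuous th f)).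
- by apply: integrableD_real; exact: integrable_norm (Jb_slope_integrable _).
- move=> n th; apply: normr_le_itv.
  by have := fnM n; rewrite ler_norml => /andP [lo hi]; rewrite !Jb_slope_nondecreasing.
- exact: Jb_slope_integrable.
Qed.

Lemma Hslope_cvg (fn : nat -> R) f : fn @ \oo --> f -> Hslope \o fn @ \oo --> Hslope f.
Proof.
move=> fn_f; rewrite HslopeE.
have -> : Hslope \o fn = fun n => (1 - p) * Ex mu (Jb_slope (fn n)) - p * pi2.
  by apply/funext => n; exact: HslopeE.
exact: (cvgB (cvgMl_tmp (a := 1 - p) (Ex_Jb_slope_cvg fn_f)) (cvg_cst _)).
Qed.

Lemma Hslope_increasing : strictly_convex_fun phi -> {homo Hslope : x y / x < y}.
Proof.
move=> phi_sconv a b ab; rewrite !HslopeE ltrD2r ltr_pM2l ?subr_gt0 //.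
rewrite -subr_gt0 /Ex -RintegralB ?Jb_slope_integrable //.
apply: Rintegral_gt0 => [||th].
- by have := probability_setT mu; rewrite /= => ->; rewrite oner_neq0.
- by apply: integrableB_real; exact: Jb_slope_integrable.
- by rewrite subr_gt0; exact: Jb_slope_increasing.
Qed.

End demand_response.

Unset Implicit Arguments.
Theorem theorem1 (R : realType) (mu : probability R R)
  (u : R -> R -> R) (phi : R -> R) (pi0 pi2 p : R)
  (qb : R -> R -> R) (qc : R -> R)
  (* theta has a continuous (atomless) distribution mu *)
  (Hcont : forall t : R, mu [set t] = 0%E)
  (* u twice differentiable, strictly concave, monotone increasing in q *)
  (Hu2 : forall th, twice_diff (fun q => u q th))
  (Hucc : forall th, strictly_concave_fun (fun q => u q th))
  (Huinc : forall th, {homo (fun q => u q th) : x y / x <= y})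
  (Hpi0 : 0 < pi0) (Hpi2 : 0 < pi2) (Hp : 0 < p < 1)
  (* phi convex, twice differentiable, phi 0 = phi' 0 = 0, even *)
  (Hphicv : convex_fun phi) (Hphi2 : twice_diff phi)
  (Hphi0 : phi 0 = 0) (Hdphi0 : derive1 phi 0 = 0)
  (Hphiev : forall x, phi x = phi (- x))
  (* q^b(f,theta), q^c(theta) are the minimizers *)
  (Hqb : forall f th q, Jb pi0 u phi f (qb f th) th <= Jb pi0 u phi f q th)
  (Hqc : forall f th q, Jc pi0 pi2 u f (qc th) th <= Jc pi0 pi2 u f q th)
  (* the expectations appearing in H and M exist *)
  (HintJc : forall f, mu.-integrable setT (EFin \o (fun th => Jc pi0 pi2 u f (qc th) th)))
  (HintJb : forall f, mu.-integrable setT (EFin \o (fun th => Jb pi0 u phi f (qb f th) th)))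
  (Hintdc : mu.-integrable setT (EFin \o (fun th => du u (qc th) th)))
  (Hintdb : forall f, mu.-integrable setT (EFin \o (fun th => du u (qb f th) th))) :
  (forall fs, (forall f, Hfun mu p pi0 pi2 u phi qb qc fs <= Hfun mu p pi0 pi2 u phi qb qc f) ->
      pi0 = Mfun mu p u qb qc fs)
  /\ (forall fs, pi0 = Mfun mu p u qb qc fs ->
      forall f, Hfun mu p pi0 pi2 u phi qb qc fs <= Hfun mu p pi0 pi2 u phi qb qc f)
  /\ (strictly_convex_fun phi ->
      forall f1 f2,
        (forall f, Hfun mu p pi0 pi2 u phi qb qc f1 <= Hfun mu p pi0 pi2 u phi qb qc f) ->
        (forall f, Hfun mu p pi0 pi2 u phi qb qc f2 <= Hfun mu p pi0 pi2 u phi qb qc f) ->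
        f1 = f2).
Proof.
have u_der th q : derivable (u^~ th) q 1 := (Hu2 th q).1.
have phi_der x : derivable phi x 1 := (Hphi2 x).1.
have p_lt1 : p < 1 by case/andP: Hp.
have H_tangent := Hfun_ge_tangent u_der Hucc phi_der Hphicv Hqb Hqc p_lt1 HintJc HintJb Hintdb.
have Hslope_seq := Hslope_cvg u_der Hucc phi_der Hphicv Hqb Hqc Hintdb.
have Hslope_min fs : (forall f, Hfun mu p pi0 pi2 u phi qb qc fs <= Hfun mu p pi0 pi2 u phi qb qc f) ->
    Hslope mu u pi0 p qb qc fs = 0.
  by move=> fs_min; apply: (subgradient_min_eq0 H_tangent fs_min) => xn; exact: Hslope_seq.
split; [|split].
- by move=> fs /Hslope_min /eqP; rewrite subr_eq0 => /eqP.
- by move=> fs fsM; apply: (subgradient_eq0_min H_tangent); rewrite /Hslope -fsM subrr.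
- move=> phi_sconv f1 f2 /Hslope_min f1_0 /Hslope_min f2_0.
  have Hslope_incr := Hslope_increasing u_der Hucc phi_der Hphicv Hqb Hqc p_lt1 Hintdb phi_sconv.
  by apply: (inc_inj (le_mono Hslope_incr)); rewrite f1_0 f2_0.
Qed.
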